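(* A large scale group $G$ has asymptotic dimension $0$ if and only if for every bounded subset $B$ of $G$ the subgroup $\langle B\rangle$ generated by $B$ is bounded.
   Context: A bornology on a set $X$ is a cover of $X$ closed under taking subsets and finite unions. A large scale group is a group $G$ with a bornology $\mathcal B$ that is closed under inverses ($B\in\mathcal B\Rightarrow B^{-1}\in\mathcal B$) and products ($B_1,B_2\in\mathcal B\Rightarrow B_1B_2\in\mathcal B$); its uniformly bounded covers are the covers of $G$ refining $\{gB\}_{g\in G}$ for some $B\in\mathcal B$, and its bounded sets are the members of $\mathcal B$. A large scale space has asymptotic dimension $0$ if every uniformly bounded cover refines a uniformly bounded cover consisting of mutually disjoint sets. *)

(* an abstract (possibly infinite) group given by its operations
   and axioms; subsets are predicates G -> Prop, families of subsets are
   predicates on predicates. *)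

Record is_group {G : Type} (mul : G -> G -> G) (inv : G -> G) (e : G) : Prop := {
  grp_assoc : forall x y z, mul x (mul y z) = mul (mul x y) z;
  grp_id_l  : forall x, mul e x = x;
  grp_inv_l : forall x, mul (inv x) x = e
}.

Definition subset {G : Type} (A C : G -> Prop) : Prop := forall x, A x -> C x.
Definition setU {G : Type} (A C : G -> Prop) : G -> Prop := fun x => A x \/ C x.

Definition bornology {G : Type} (Bo : (G -> Prop) -> Prop) : Prop :=
  (forall x : G, exists A, Bo A /\ A x) /\
  (forall A C, Bo A -> subset C A -> Bo C) /\
  (forall A C, Bo A -> Bo C -> Bo (setU A C)).

Definition set_inv {G : Type} (inv : G -> G) (A : G -> Prop) : G -> Prop :=
  fun x => exists a, A a /\ x = inv a.
Definition set_mul {G : Type} (mul : G -> G -> G) (A C : G -> Prop) : G -> Prop :=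
  fun x => exists a c, A a /\ C c /\ x = mul a c.
Definition lcoset {G : Type} (mul : G -> G -> G) (g : G) (A : G -> Prop) : G -> Prop :=
  fun x => exists a, A a /\ x = mul g a.

Definition large_scale_group {G : Type} (mul : G -> G -> G) (inv : G -> G) (e : G)
  (Bo : (G -> Prop) -> Prop) : Prop :=
  is_group mul inv e /\ bornology Bo /\
  (forall A, Bo A -> Bo (set_inv inv A)) /\
  (forall A C, Bo A -> Bo C -> Bo (set_mul mul A C)).

Definition is_cover {G : Type} (U : (G -> Prop) -> Prop) : Prop :=
  forall x : G, exists V, U V /\ V x.

Definition refines {G : Type} (U W : (G -> Prop) -> Prop) : Prop :=
  forall V, U V -> exists V', W V' /\ subset V V'.

Definition unif_bounded_cover {G : Type} (mul : G -> G -> G) (Bo : (G -> Prop) -> Prop)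
  (U : (G -> Prop) -> Prop) : Prop :=
  is_cover U /\
  exists B, Bo B /\ refines U (fun V => exists g, V = lcoset mul g B).

Definition mutually_disjoint {G : Type} (U : (G -> Prop) -> Prop) : Prop :=
  forall V W, U V -> U W -> (exists x, V x /\ W x) -> forall y, V y <-> W y.

Definition asdim0 {G : Type} (mul : G -> G -> G) (Bo : (G -> Prop) -> Prop) : Prop :=
  forall U, unif_bounded_cover mul Bo U ->
    exists W, unif_bounded_cover mul Bo W /\ mutually_disjoint W /\ refines U W.

Definition is_subgroup {G : Type} (mul : G -> G -> G) (inv : G -> G) (e : G)
  (H : G -> Prop) : Prop :=
  H e /\ (forall x y, H x -> H y -> H (mul x y)) /\ (forall x, H x -> H (inv x)).

Definition gen_subgroup {G : Type} (mul : G -> G -> G) (inv : G -> G) (e : G)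
  (B : G -> Prop) : G -> Prop :=
  fun x => forall H, is_subgroup mul inv e H -> subset B H -> H x.

From Stdlib Require Import Setoid.

(* (<-) If every bounded B generates a bounded subgroup <B>, then the left
   cosets of <B> form a uniformly bounded cover by mutually disjoint sets,
   and any cover refining {gB} refines it.

   (->) Given a bounded B, enlarge it to the bounded set B' = B u B^-1 u {e}
   and apply asymptotic dimension 0 to the cover {gB'}.  The member W0 of the
   resulting disjoint refinement that contains e is closed under right
   multiplication by B', so B lies in the right stabilizer
   {x | forall y, y in W0 <-> yx in W0}, which is a subgroup.  Hence
   <B> = e<B> is contained in W0, and W0 is bounded, as is every member of
   a uniformly bounded cover. *)

Definition lcosets {G : Type} (mul : G -> G -> G) (A : G -> Prop) : (G -> Prop) -> Prop :=
  fun V => exists g, V = lcoset mul g A.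

Definition right_stabilizer {G : Type} (mul : G -> G -> G) (W : G -> Prop) : G -> Prop :=
  fun x => forall y, W y <-> W (mul y x).

Section Group.
Variables (G : Type) (mul : G -> G -> G) (inv : G -> G) (e : G).
Hypothesis hg : is_group mul inv e.

Lemma idempotent_is_e z : mul z z = z -> z = e.
Proof.
  intro Hz. destruct hg as [A L I].
  transitivity (mul (mul (inv z) z) z).
  - rewrite I; symmetry; apply L.
  - rewrite <- A, Hz. apply I.
Qed.

(* The axioms only give left inverses and a left identity; these are two-sided. *)
Lemma mul_inv_r x : mul x (inv x) = e.
Proof.
  apply idempotent_is_e. destruct hg as [A L I].
  rewrite <- A, (A (inv x) x (inv x)), I, L. reflexivity.
Qed.

Lemma mul_e_r x : mul x e = x.
Proof.
  destruct hg as [A L I]. rewrite <- (I x), A, mul_inv_r. apply L.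
Qed.

Lemma gen_subgroup_is_subgroup B : is_subgroup mul inv e (gen_subgroup mul inv e B).
Proof.
  split; [|split].
  - intros K [K1 _] _; exact K1.
  - intros x y Hx Hy K HK HB. pose proof HK as [_ [K2 _]].
    apply K2; [apply Hx|apply Hy]; assumption.
  - intros x Hx K HK HB. pose proof HK as [_ [_ K3]].
    apply K3, Hx; assumption.
Qed.

Lemma gen_subgroup_incl B : subset B (gen_subgroup mul inv e B).
Proof. intros b Hb K _ HBK. apply HBK, Hb. Qed.

Lemma lcoset_mem A g : A e -> lcoset mul g A g.
Proof. intro Ae. exists e. split; [exact Ae | symmetry; apply mul_e_r]. Qed.

Lemma lcosets_cover A : A e -> is_cover (lcosets mul A).
Proof.
  intros Ae x. exists (lcoset mul x A). split.
  - exists x; reflexivity.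
  - apply lcoset_mem, Ae.
Qed.

Lemma lcoset_meet_incl H g g' a c :
  is_subgroup mul inv e H -> H a -> H c -> mul g a = mul g' c ->
  subset (lcoset mul g H) (lcoset mul g' H).
Proof.
  intros [H1 [H2 H3]] Ha Hc Heq x [h [Hh ->]].
  exists (mul c (mul (inv a) h)). split; [auto|].
  destruct hg as [A L I].
  assert (Hg : g = mul (mul g' c) (inv a)).
  { rewrite <- Heq, <- A, mul_inv_r, mul_e_r. reflexivity. }
  rewrite Hg, <- !A. reflexivity.
Qed.

Lemma lcosets_disjoint H :
  is_subgroup mul inv e H -> mutually_disjoint (lcosets mul H).
Proof.
  intros HH V W [g ->] [g' ->] [x [[a [Ha Hxa]] [c [Hc Hxc]]]] y.
  rewrite Hxa in Hxc. split; intro Hy.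
  - exact (lcoset_meet_incl H g g' a c HH Ha Hc Hxc y Hy).
  - exact (lcoset_meet_incl H g' g c a HH Hc Ha (eq_sym Hxc) y Hy).
Qed.

Lemma right_stabilizer_subgroup W : is_subgroup mul inv e (right_stabilizer mul W).
Proof.
  destruct hg as [A L I]. split; [|split].
  - intro y. rewrite mul_e_r. tauto.
  - intros x z Hx Hz y. rewrite (Hx y), (Hz (mul y x)), A. tauto.
  - intros x Hx y. rewrite (Hx (mul y (inv x))), <- A, I, mul_e_r. tauto.
Qed.

Lemma right_stabilizer_intro W b :
  (forall y, W y -> W (mul y b)) -> (forall y, W y -> W (mul y (inv b))) ->
  right_stabilizer mul W b.
Proof.
  intros Hb Hbinv y. split; [apply Hb|].
  intro Hyb. destruct hg as [A _ _].
  replace y with (mul (mul y b) (inv b)) by (rewrite <- A, mul_inv_r, mul_e_r; reflexivity).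
  apply Hbinv, Hyb.
Qed.

(* In a disjoint family refining the cosets of A (with e in A), each member
   is closed under right multiplication by A: the member containing the coset
   yA meets the member containing y, so the two coincide. *)
Lemma disjoint_refinement_closed A W W0 y c :
  A e -> mutually_disjoint W -> refines (lcosets mul A) W ->
  W W0 -> W0 y -> A c -> W0 (mul y c).
Proof.
  intros Ae Wdis WA HW0 Hy Hc.
  destruct (WA (lcoset mul y A)) as [W1 [HW1 S1]]; [exists y; reflexivity|].
  assert (W1y : W1 y) by (apply S1, lcoset_mem, Ae).
  apply (Wdis W1 W0 HW1 HW0 (ex_intro _ y (conj W1y Hy))).
  apply S1. exists c; split; [exact Hc | reflexivity].
Qed.

End Group.

Section LargeScaleGroup.
Variables (G : Type) (mul : G -> G -> G) (inv : G -> G) (e : G)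
  (Bo : (G -> Prop) -> Prop).
Hypothesis hg : is_group mul inv e.
Hypothesis hborn : bornology Bo.
Hypothesis hinv : forall A, Bo A -> Bo (set_inv inv A).
Hypothesis hmul : forall A C, Bo A -> Bo C -> Bo (set_mul mul A C).

Lemma bounded_singleton g : Bo (fun x => x = g).
Proof.
  destruct hborn as [Bcov [Bsub _]].
  destruct (Bcov g) as [A [HA Ag]]. apply (Bsub A _ HA). intros x ->; exact Ag.
Qed.

(* Left translates of bounded sets are bounded: gD lies in {g}D. *)
Lemma bounded_lcoset g D : Bo D -> Bo (lcoset mul g D).
Proof.
  intro HD. destruct hborn as [_ [Bsub _]].
  apply (Bsub (set_mul mul (fun x => x = g) D)); [apply hmul; [apply bounded_singleton | exact HD]|].
  intros x [d [Hd ->]]. exists g, d. auto.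
Qed.

Lemma unif_bounded_member W V : unif_bounded_cover mul Bo W -> W V -> Bo V.
Proof.
  intros [_ [D [HD WD]]] HV. destruct hborn as [_ [Bsub _]].
  destruct (WD V HV) as [V' [[g ->] HsV]].
  exact (Bsub _ _ (bounded_lcoset g D HD) HsV).
Qed.

Lemma lcosets_unif_bounded A : Bo A -> A e -> unif_bounded_cover mul Bo (lcosets mul A).
Proof.
  intros HA Ae. split; [exact (lcosets_cover G mul inv e hg A Ae)|].
  exists A. split; [exact HA|]. intros V HV. exists V. split; [exact HV | intros y Hy; exact Hy].
Qed.

Definition symmetric_hull (B : G -> Prop) : G -> Prop :=
  setU (setU B (set_inv inv B)) (fun x => x = e).

Lemma symmetric_hull_bounded B : Bo B -> Bo (symmetric_hull B).
Proof.
  intro HB. destruct hborn as [_ [_ BU]].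
  apply BU; [apply BU; [exact HB | apply hinv, HB] | apply bounded_singleton].
Qed.

(* Asymptotic dimension 0 forces generated subgroups of bounded sets to be
   bounded: <B> lies in the member W0 containing e of a disjoint refinement
   of the cosets of the symmetric hull of B. *)
Lemma asdim0_gen_subgroup_bounded B :
  asdim0 mul Bo -> Bo B -> Bo (gen_subgroup mul inv e B).
Proof.
  intros Had HB.
  set (B' := symmetric_hull B).
  assert (B'e : B' e) by (right; reflexivity).
  destruct (Had (lcosets mul B') (lcosets_unif_bounded B' (symmetric_hull_bounded B HB) B'e))
    as [W [Wub [Wdis WU]]].
  destruct (proj1 Wub e) as [W0 [HW0 W0e]].
  assert (W0_closed : forall y c, W0 y -> B' c -> W0 (mul y c))
    by (intros y c; apply (disjoint_refinement_closed G mul inv e hg B' W); assumption).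
  assert (B_stab : subset B (right_stabilizer mul W0)).
  { intros b Hb. apply (right_stabilizer_intro G mul inv e hg); intros y Hy;
      apply W0_closed; auto.
    - left; left; exact Hb.
    - left; right; exists b; auto. }
  assert (gen_in_W0 : subset (gen_subgroup mul inv e B) W0).
  { intros x Hx. destruct hg as [_ L _]. rewrite <- (L x).
    exact (proj1 (Hx _ (right_stabilizer_subgroup G mul inv e hg W0) B_stab e) W0e). }
  destruct hborn as [_ [Bsub _]].
  exact (Bsub W0 _ (unif_bounded_member W W0 Wub HW0) gen_in_W0).
Qed.

(* Conversely, if <B> is bounded whenever B is, then the cosets of <B>, for
   B the bounding set of a uniformly bounded cover, form a disjoint uniformly
   bounded cover refining it. *)
Lemma gen_subgroup_bounded_asdim0 :
  (forall B, Bo B -> Bo (gen_subgroup mul inv e B)) -> asdim0 mul Bo.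
Proof.
  intros Hgen U [_ [B [HB UB]]].
  set (H := gen_subgroup mul inv e B).
  pose proof (gen_subgroup_is_subgroup G mul inv e B) as HH. fold H in HH.
  exists (lcosets mul H). split; [|split].
  - exact (lcosets_unif_bounded H (Hgen B HB) (proj1 HH)).
  - exact (lcosets_disjoint G mul inv e hg H HH).
  - intros V HV. destruct (UB V HV) as [V' [[g ->] HsV]].
    exists (lcoset mul g H). split; [exists g; reflexivity|].
    intros x Hx. destruct (HsV x Hx) as [b [Hb ->]].
    exists b. split; [exact (gen_subgroup_incl G mul inv e B b Hb) | reflexivity].
Qed.

End LargeScaleGroup.

Theorem theorem4p6 (G : Type) (mul : G -> G -> G) (inv : G -> G) (e : G)
  (Bo : (G -> Prop) -> Prop) :
  large_scale_group mul inv e Bo ->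
  (asdim0 mul Bo <-> forall B, Bo B -> Bo (gen_subgroup mul inv e B)).
Proof.
  intros [hg [hborn [hinv hmul]]]. split.
  - intros Had B HB. exact (asdim0_gen_subgroup_bounded G mul inv e Bo hg hborn hinv hmul B Had HB).
  - exact (gen_subgroup_bounded_asdim0 G mul inv e Bo hg).
Qed.
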